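(* Let $G$ be a simple connected graph with $n$ vertices and $m$ edges, let $k>2$ and $r\ge1$ be integers, and let $S_k^r(G)$ be the $r$-th iterated $k$-parallel subdivision graph of $G$. Then $$Kf^*(S_k^r(G))=(8k)^rKf^*(G)+\frac{(2k)^r(4^r-1)}{3}(m-2mn)+\frac{k(4k)^r(k^r-2^r)}{k-2}m^2-\frac{k(2k)^r\big[4^r-2k(4^r-1)+3(2k)^r-4\big]}{3(k-2)(2k-1)}m^2.$$
   Context: The $k$-parallel subdivision graph $S_k(H)$ of a graph $H$ is obtained by replacing each edge $uv$ of $H$ by $k$ internally disjoint paths $u-w-v$ of length $2$ (each with its own new middle vertex). Iterates: $S_k^0(G)=G$ and $S_k^r(G)=S_k(S_k^{r-1}(G))$. For a connected graph $H$, the multiplicative degree Kirchhoff index is $Kf^*(H)=\sum_{\{a,b\}\subseteq V(H)} d_a d_b\,\Omega_{ab}(H)$, where the sum is over unordered pairs of distinct vertices, $d_a$ is the degree of $a$, and $\Omega_{ab}(H)$ is the resistance distance (effective resistance with unit resistors on the edges); equivalently $Kf^*(H)=2|E(H)|\sum_{i\ge2}1/\lambda_i$ where $0=\lambda_1<\lambda_2\le\dots$ are the eigenvalues of the normalized Laplacian $I-D^{-1/2}AD^{-1/2}$ of $H$. *)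

From HB Require Import structures.
From mathcomp Require Import all_boot all_order all_algebra.
Set Implicit Arguments. Unset Strict Implicit. Unset Printing Implicit Defensive.
Import Order.TTheory GRing.Theory Num.Theory.
Local Open Scope ring_scope.

Record graph := Graph { gV : finType; gadj : rel gV }.

Definition simple_graph (G : graph) : Prop :=
  symmetric (@gadj G) /\ irreflexive (@gadj G).

Definition connected_graph (G : graph) : Prop :=
  forall u v : gV G, connect (@gadj G) u v.

(* Edges = unordered pairs {u,v}, each represented once as the ordered pair
   (u,v) with rank u < rank v in the enumeration of the vertex type. *)
Definition is_edge (G : graph) (p : gV G * gV G) : bool :=
  @gadj G p.1 p.2 && (enum_rank p.1 < enum_rank p.2)%N.

Definition edge_t (G : graph) : finType := {p : gV G * gV G | is_edge p}.

Definition nverts (G : graph) : nat := #|gV G|.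
Definition nedges (G : graph) : nat := #|[pred p : gV G * gV G | is_edge p]|.
Definition deg (G : graph) (u : gV G) : nat := #|[pred v | @gadj G u v]|.

(* k-parallel subdivision: keep the old vertices, add k new middle vertices
   (e,i), i < k, for every edge e = uv, each adjacent exactly to u and v. *)
Definition sub_V (k : nat) (G : graph) : finType := (gV G + (edge_t G * 'I_k))%type.

Definition sub_adj (k : nat) (G : graph) : rel (sub_V k G) :=
  fun x y =>
    match x, y with
    | inl u, inr (e, _) => (u == (val e).1) || (u == (val e).2)
    | inr (e, _), inl u => (u == (val e).1) || (u == (val e).2)
    | _, _ => false
    end.

Definition subdiv (k : nat) (G : graph) : graph := @Graph (sub_V k G) (@sub_adj k G).

Fixpoint iter_subdiv (k r : nat) (G : graph) : graph :=
  match r with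
  | 0 => G
  | r'.+1 => subdiv k (iter_subdiv k r' G)
  end.

Definition laplacian (R : fieldType) (G : graph) : 'M[R]_(#|gV G|) :=
  \matrix_(i, j)
    (if i == j then (deg (enum_val i))%:R
     else if @gadj G (enum_val i) (enum_val j) then -1 else 0).

(* Resistance distance (Kirchhoff): inject a unit current at a and extract it
   at b; solve for potentials x with x L = e_a - e_b (L symmetric) and take
   x_a - x_b.  pinvmx gives a solution whenever one exists (connected graph). *)
Definition resistance (R : fieldType) (G : graph) (a b : gV G) : R :=
  let u : 'rV[R]_(#|gV G|) :=
    delta_mx 0 (enum_rank a) - delta_mx 0 (enum_rank b) in
  let x := u *m pinvmx (laplacian R G) in
  x 0 (enum_rank a) - x 0 (enum_rank b).

Definition Kf_star (R : fieldType) (G : graph) : R :=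
  \sum_(p : gV G * gV G | (enum_rank p.1 < enum_rank p.2)%N)
     (deg p.1)%:R * (deg p.2)%:R * resistance R p.1 p.2.

(* Resistances can be read off any family of potentials [M p], one for each vertex [p], with
   [lap (M p) = e_p - c] for a fixed vector [c]: then [Omega_ab = M a a - M a b - M b a + M b b],
   so that [Kf* = (\sum_u d_u) (\sum_u d_u M u u) - \sum_(u,v) d_u d_v M u v].  Such a family
   exists on a connected graph, whose Laplacian has only the constants in its kernel, and a family
   for [H] lifts explicitly to [S_k(H)]: an old potential is scaled by [2/k] and extended to each
   middle vertex by the mean of the two ends of its edge; the potential of a middle vertex is the
   average of those of its two ends plus half its indicator.  Substituting the lift gives
   [Kf*(S_k H) = 8k Kf*(H) + 2km - 4kmn + 4k^2m^2], and with the counts [m_r = (2k)^r m] and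
   [n_r = n + km((2k)^r - 1)/(2k - 1)] of the iterates this recursion solves to the closed form. *)

From HB Require Import structures.
From mathcomp Require Import all_boot all_order all_algebra.
From mathcomp Require Import ring zify.
Import Order.TTheory GRing.Theory Num.Theory.
Local Open Scope ring_scope.
Set Implicit Arguments. Unset Strict Implicit. Unset Printing Implicit Defensive.

Lemma sumr_const_natr (R : pzSemiRingType) (T : finType) (x : R) :
  \sum_(i : T) x = #|T|%:R * x.
Proof. by rewrite sumr_const mulr_natl. Qed.

Lemma sum_delta (R : pzSemiRingType) (T : finType) (a : T) (f : T -> R) :
  \sum_v (v == a)%:R * f v = f a.
Proof.
rewrite (bigD1 a) //= eqxx mul1r big1 ?addr0 // => v /negbTE ->.
by rewrite mul0r.
Qed.

Lemma sum_delta1 (R : pzSemiRingType) (T : finType) (a : T) :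
  \sum_v (v == a)%:R = 1 :> R.
Proof. by rewrite -[RHS](sum_delta a (fun _ => 1)); apply: eq_bigr => v _; rewrite mulr1. Qed.

Lemma sum_prod (R : nmodType) (I J : finType) (F : I * J -> R) :
  \sum_p F p = \sum_i \sum_j F (i, j).
Proof. by rewrite pair_bigA; apply: eq_bigr => -[]. Qed.

Lemma edge_ends_neq (H : graph) (e : edge_t H) : (val e).1 != (val e).2.
Proof. by case: e => [[x y]] /= /andP [_]; apply: contraTneq => ->; rewrite ltnn. Qed.

Local Notation rk := enum_rank.

Lemma sum_split_lt_rank (R : nmodType) (T : finType) (F : T * T -> R) :
  \sum_p F p = \sum_(p | (rk p.1 < rk p.2)%N) (F p + F (p.2, p.1)) + \sum_a F (a, a).
Proof.
rewrite (bigID (fun p : T * T => (rk p.1 < rk p.2)%N)) /= big_split /= -addrA.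
congr (_ + _); rewrite (bigID (fun p : T * T => (rk p.2 < rk p.1)%N)) /=.
congr (_ + _).
  rewrite (reindex_inj (h := fun p : T * T => (p.2, p.1))) /=; last first.
    by move=> [? ?] [? ?] [-> ->].
  by apply: eq_bigl => -[x y] /=; case: ltngtP.
rewrite (eq_bigl (fun p : T * T => p.1 == p.2)); last first.
  move=> [x y] /=; case: ltngtP => [h|h|/val_inj/enum_rank_inj ->]; last by rewrite eqxx.
  1,2: by apply/esym/eqP => xy; move: h; rewrite xy ltnn.
rewrite big_mkcond sum_prod; apply: eq_bigr => a _ /=.
rewrite (bigD1 a) //= eqxx big1 ?addr0 // => b /negbTE.
by rewrite eq_sym => ->.
Qed.

Lemma sum_lt_rank_sym (R : comNzRingType) (T : finType) (F : T * T -> R) :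
  (forall a b, F (a, b) = F (b, a)) -> (forall a, F (a, a) = 0) ->
  \sum_p F p = 2 * \sum_(p | (rk p.1 < rk p.2)%N) F p.
Proof.
move=> Fsym F0; rewrite sum_split_lt_rank [\sum_(a : T) _]big1 ?addr0 // mulr_sumr.
by apply: eq_bigr => -[a b] _; rewrite /= -Fsym; ring.
Qed.

Section Laplacian.
Variables (R : numFieldType) (H : graph).
Local Notation V := (gV H).
Local Notation adj := (@gadj H).
Local Notation d u := ((@deg H u)%:R : R).

Lemma deg_sum1 (w : V) : d w = \sum_(v | adj w v) 1.
Proof. by rewrite /deg -sumr_const. Qed.

Definition lap (z : V -> R) (w : V) : R := d w * z w - \sum_(v | adj w v) z v.

Lemma lapB (f g : V -> R) w : lap (fun y => f y - g y) w = lap f w - lap g w.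
Proof. by rewrite /lap sumrB; ring. Qed.

Lemma lap_comb3 a b c (f g h : V -> R) w :
  lap (fun y => a * f y + b * g y + c * h y) w = a * lap f w + b * lap g w + c * lap h w.
Proof. by rewrite /lap !big_split /= -!mulr_sumr; ring. Qed.

Definition green_family (M : V -> V -> R) (c : V -> R) :=
  forall p w, lap (M p) w = (w == p)%:R - c w.

Hypothesis sym : symmetric adj.
Hypothesis irr : irreflexive adj.

Lemma sum_edge_orient (g : V -> V -> R) :
  \sum_(e : edge_t H) (g (val e).1 (val e).2 + g (val e).2 (val e).1)
  = \sum_u \sum_(v | adj u v) g u v.
Proof.
rewrite -(big_sub [pred p | is_edge p] (fun p => g p.1 p.2 + g p.2 p.1)).
have -> : \sum_u \sum_(v | adj u v) g u v = \sum_p (if adj p.1 p.2 then g p.1 p.2 else 0).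
  by rewrite sum_prod; apply: eq_bigr => u _; rewrite big_mkcond.
rewrite sum_split_lt_rank /= [\sum_(a : V) _]big1 ?addr0; last by move=> a _ /=; rewrite irr.
rewrite [RHS]big_mkcond [LHS]big_mkcond; apply: eq_bigr => -[x y] _ /=.
rewrite inE /is_edge /= (sym y x).
by case: (adj x y); case: (_ < _)%N; rewrite /= ?addr0.
Qed.

Lemma handshake : 2 * (nedges H)%:R = \sum_(u : V) d u.
Proof.
under eq_bigr do rewrite deg_sum1.
rewrite -(sum_edge_orient (fun _ _ => 1)) sumr_const_natr /edge_t card_sig; ring.
Qed.

Lemma sum_edge_ends (f : V -> R) :
  \sum_(e : edge_t H) (f (val e).1 + f (val e).2) = \sum_u d u * f u.
Proof.
rewrite (sum_edge_orient (fun a _ => f a)); apply: eq_bigr => u _.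
by rewrite deg_sum1 mulr_suml; apply: eq_bigr => v _; rewrite mul1r.
Qed.

Lemma sum_edge_incident (g : V -> V -> R) u :
  \sum_(e : edge_t H) ((u == (val e).1)%:R * g (val e).1 (val e).2
                       + (u == (val e).2)%:R * g (val e).2 (val e).1)
  = \sum_(v | adj u v) g u v.
Proof.
rewrite (sum_edge_orient (fun a b => (u == a)%:R * g a b)).
under eq_bigr => a _ do rewrite -mulr_sumr eq_sym.
exact: sum_delta.
Qed.

Lemma sum_lap (z : V -> R) : \sum_w lap z w = 0.
Proof.
apply/eqP; rewrite /lap sumrB subr_eq0; apply/eqP.
under eq_bigr => w _ do rewrite deg_sum1 mulr_suml big_mkcond.
rewrite exchange_big /=; apply: eq_bigr => v _; rewrite [RHS]big_mkcond.
by apply: eq_bigr => w _; rewrite sym; case: adj; rewrite ?mul1r ?mul0r.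
Qed.

Lemma mul_row_laplacian (z : V -> R) j :
  ((\row_i z (enum_val i)) *m laplacian R H) 0 j = lap z (enum_val j).
Proof.
rewrite /lap; have -> : \sum_(v | adj (enum_val j) v) z v =
   \sum_(i : 'I_#|V| | i != j) (if adj (enum_val j) (enum_val i) then z (enum_val i) else 0).
  rewrite (reindex (fun i : 'I_#|V| => enum_val i)) /=; last exact/onW_bij/enum_val_bij.
  by rewrite big_mkcond (bigD1 j) //= (irr (enum_val j)) add0r.
rewrite !mxE; under eq_bigr do rewrite !mxE.
rewrite (bigD1 j) //= eqxx mulrC -sumrN.
congr (_ + _); apply: eq_bigr => i /negbTE -> /=.
by rewrite (sym (enum_val i)); case: adj; rewrite ?mulrN1 ?oppr0 ?mulr0.
Qed.

Lemma tr_laplacian : (laplacian R H)^T = laplacian R H.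
Proof. by apply/matrixP => i j; rewrite !mxE eq_sym; case: eqP => [->|_] //; rewrite sym. Qed.

Lemma mul_tr_delta_diff (y : 'rV[R]_#|V|) a b :
  (y *m (delta_mx 0 (rk a) - delta_mx 0 (rk b) : 'rV[R]_#|V|)^T) 0 0 = y 0 (rk a) - y 0 (rk b).
Proof.
by rewrite (raddfB trmx) /= !trmx_delta mulmxBr -(colE (rk a)) -(colE (rk b)) !mxE.
Qed.

Lemma resistance_potential (z : V -> R) a b :
  (forall w, lap z w = (w == a)%:R - (w == b)%:R) -> resistance R a b = z a - z b.
Proof.
move=> hz; set u := delta_mx 0 (rk a) - delta_mx 0 (rk b) : 'rV[R]_#|V|.
set zr := \row_i z (enum_val i) : 'rV[R]_#|V|.
have zL : zr *m laplacian R H = u.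
  apply/rowP => j; rewrite mul_row_laplacian hz !mxE /=.
  have eq_rank v : (j == rk v) = (enum_val j == v).
    by rewrite -(inj_eq enum_rank_inj) enum_valK.
  by rewrite !eq_rank.
rewrite /resistance -/u; set x := u *m pinvmx (laplacian R H).
have xL : x *m laplacian R H = u by apply: mulmxKpV; rewrite -zL submxMl.
(* [x_a - x_b = x u^T = x L z^T = u z^T = z_a - z_b], as [L] is symmetric. *)
rewrite -mul_tr_delta_diff -/u -zL trmx_mul tr_laplacian mulmxA xL.
by rewrite -[u *m _]trmxK trmx_mul trmxK mxE mul_tr_delta_diff !mxE !enum_rankK.
Qed.

Lemma sum_green_offset M c (p : V) : green_family M c -> \sum_w c w = 1.
Proof.
move=> hM; have := sum_lap (M p); under eq_bigr do rewrite hM.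
by rewrite sumrB sum_delta1 => /eqP; rewrite subr_eq0 => /eqP <-.
Qed.

Lemma resistance_green M c a b : green_family M c ->
  resistance R a b = M a a - M b a - M a b + M b b.
Proof.
move=> hM; rewrite (resistance_potential (z := fun x => M a x - M b x)) => [|w]; first by ring.
by rewrite lapB !hM; ring.
Qed.

Lemma Kf_star_green M c : green_family M c ->
  Kf_star R H = (\sum_u d u) * (\sum_u d u * M u u) - \sum_u \sum_v d u * d v * M u v.
Proof.
move=> hM.
pose F (p : V * V) := d p.1 * d p.2 * (M p.1 p.1 - M p.2 p.1 - M p.1 p.2 + M p.2 p.2).
have -> : Kf_star R H = \sum_(p | (rk p.1 < rk p.2)%N) F p.
  by apply: eq_bigr => -[a b] _; rewrite (resistance_green _ _ hM).
have Fsym a b : F (a, b) = F (b, a) by rewrite /F /=; ring.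
have F0 a : F (a, a) = 0 by rewrite /F /=; ring.
have eF a b : F (a, b) = d a * M a a * d b + d b * M b b * d a
                         - d b * d a * M b a - d a * d b * M a b by rewrite /F /=; ring.
apply: (@mulfI _ 2); first by rewrite pnatr_eq0.
rewrite -(sum_lt_rank_sym Fsym F0) sum_prod.
under eq_bigr => a _ do under eq_bigr => b _ do rewrite eF.
under eq_bigr => a _ do rewrite !sumrB big_split /= -mulr_sumr -mulr_suml.
rewrite !sumrB big_split /= -mulr_suml -mulr_sumr.
by rewrite [\sum_a \sum_b d b * d a * M b a]exchange_big /=; ring.
Qed.

End Laplacian.

Section Connected.
Variables (R : realFieldType) (H : graph).
Local Notation V := (gV H).
Local Notation adj := (@gadj H).
Local Notation L := (laplacian R H).
Hypothesis sym : symmetric adj.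
Hypothesis irr : irreflexive adj.
Hypothesis conn : forall u v : V, connect adj u v.

(* [\sum_w \sum_(v ~ w) (z w - z v)^2 = 2 \sum_w z w * lap z w], which vanishes. *)
Lemma lap_eq0_const (z : V -> R) : (forall w, lap z w = 0) -> forall u v, z u = z v.
Proof.
move=> hz.
set A := \sum_w \sum_(v | adj w v) z w * (z w - z v).
have A0 : A = 0.
  rewrite /A big1 // => w _; transitivity (z w * lap z w); last by rewrite hz mulr0.
  rewrite -mulr_sumr sumrB /lap deg_sum1 mulr_suml.
  by congr (_ * (_ - _)); apply: eq_bigr => v _; rewrite mul1r.
have A_swap : \sum_w \sum_(v | adj w v) z v * (z v - z w) = A.
  rewrite /A; under eq_bigr => w _ do rewrite big_mkcond.
  rewrite exchange_big /=; apply: eq_bigr => v _; rewrite [RHS]big_mkcond.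
  by apply: eq_bigr => w _; rewrite sym.
have energy0 : \sum_w \sum_(v | adj w v) (z w - z v) ^+ 2 = 0.
  transitivity (A + \sum_w \sum_(v | adj w v) z v * (z v - z w)).
    rewrite /A -big_split /=; apply: eq_bigr => w _.
    by rewrite -big_split /=; apply: eq_bigr => v _; ring.
  by rewrite A_swap A0 addr0.
have edge_eq w v : adj w v -> z w = z v.
  move=> wv; apply/eqP; rewrite -subr_eq0 -sqrf_eq0; apply/eqP.
  have row_ge0 w' : true -> 0 <= \sum_(v' | adj w' v') (z w' - z v') ^+ 2.
    by move=> _; apply: sumr_ge0 => v' _; apply: sqr_ge0.
  have /psumr_eq0P row0 := psumr_eq0P row_ge0 energy0 (i := w) isT.
  by apply: row0 wv => v' _; apply: sqr_ge0.
move=> u v; have /connectP [p hp ->] := conn u v.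
elim: p u hp => [|x p IH] u //= /andP [ux hp].
by rewrite (edge_eq _ _ ux) (IH x hp).
Qed.

Lemma row_of_rank (y : 'rV[R]_#|V|) : \row_i y 0 (rk (enum_val i)) = y.
Proof. by apply/rowP => i; rewrite mxE enum_valK. Qed.

Lemma ones_mul_laplacian : (const_mx 1 : 'rV[R]_#|V|) *m L = 0.
Proof.
apply/rowP => j; rewrite [RHS]mxE.
have := mul_row_laplacian sym irr (fun _ : V => (1 : R)) j.
rewrite /lap -deg_sum1 mulr1 subrr => <-.
by congr ((_ *m _) 0 j); apply/rowP => i; rewrite !mxE.
Qed.

Lemma kermx_laplacian_sub_ones : (kermx L <= (const_mx 1 : 'rV[R]_#|V|))%MS.
Proof.
apply/row_subP => i; set x := row i (kermx L).
have xL : x *m L = 0 by apply/sub_kermxP; rewrite (submx_trans (row_sub i _)).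
clearbody x.
have lap_x w : lap (fun v => x 0 (rk v)) w = 0.
  by rewrite -(enum_rankK w) -mul_row_laplacian // row_of_rank xL mxE.
case: (pickP (fun _ : V => true)) => [a0 _|V0]; last first.
  by rewrite (_ : x = 0) ?sub0mx // => {xL lap_x}; apply/rowP => j; have := V0 (enum_val j).
have -> : x = x 0 (rk a0) *: (const_mx 1 : 'rV[R]_#|V|).
  apply/rowP => j; rewrite !mxE mulr1 -[in LHS](enum_valK j).
  exact: lap_eq0_const lap_x _ _.
exact: scalemx_sub.
Qed.

Lemma kermx_ones_sub_laplacian : (kermx (const_mx 1 : 'cV[R]_#|V|) <= L)%MS.
Proof.
set one := const_mx 1 : 'cV[R]_#|V|.
have L_sub : (L <= kermx one)%MS.
  apply/sub_kermxP; rewrite -[L *m one]trmxK trmx_mul tr_laplacian // trmx_const.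
  by rewrite ones_mul_laplacian trmx0.
rewrite -(mxrank_leqif_sup L_sub).2; apply/eqP.
have := (mxrank_leqif_sup L_sub).1; have := mxrankS kermx_laplacian_sub_ones.
rewrite -[\rank (const_mx 1 : 'rV[R]_#|V|)]mxrank_tr trmx_const !mxrank_ker -/one.
have := rank_leq_row L; lia.
Qed.

Lemma exists_green_family : exists (M : V -> V -> R) (c : V -> R), green_family M c.
Proof.
case: (pickP (fun _ : V => true)) => [a0 _|V0]; last first.
  by exists (fun _ _ => 0), (fun _ => 0) => p; have := V0 p.
pose u p := delta_mx 0 (rk p) - delta_mx 0 (rk a0) : 'rV[R]_#|V|.
have uL p : (u p <= L)%MS.
  apply: submx_trans kermx_ones_sub_laplacian.
  by apply/sub_kermxP; rewrite mulmxBl -!rowE !row_const subrr.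
exists (fun p v => (u p *m pinvmx L) 0 (rk v)), (fun w => (w == a0)%:R) => p w.
rewrite -(enum_rankK w) -mul_row_laplacian // row_of_rank mulmxKpV // !mxE enum_rankK.
by rewrite !(inj_eq enum_rank_inj) ![w == _]eq_sym.
Qed.

End Connected.

Section Subdivision.
Variables (R : numFieldType) (H : graph) (k : nat).
Local Notation V := (gV H).
Local Notation adj := (@gadj H).
Local Notation S := (subdiv k H).
Local Notation SV := (sub_V k H).
Local Notation e1 e := (val e).1.
Local Notation e2 e := (val e).2.
Local Notation d u := ((@deg H u)%:R : R).
Local Notation dS x := ((@deg S x)%:R : R).
Local Notation kk := (k%:R : R).
Local Notation m := ((nedges H)%:R : R).
Hypothesis sym : symmetric adj.
Hypothesis irr : irreflexive adj.
Hypothesis k_gt0 : (0 < k)%N.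

Lemma subdiv_simple : simple_graph S.
Proof. by split; [move=> [u|[e i]] [v|[f j]] | move=> [u|[e i]]]. Qed.

Lemma kk_neq0 : kk != 0.
Proof. by rewrite pnatr_eq0 -lt0n. Qed.

Lemma sum_subdiv (F : SV -> R) :
  \sum_(x : SV) F x = \sum_u F (inl u) + \sum_(e : edge_t H) \sum_(i < k) F (inr (e, i)).
Proof. by rewrite big_sumType /= sum_prod. Qed.

Lemma sum_ord_const (x : R) : \sum_(i < k) x = kk * x.
Proof. by rewrite sumr_const_natr card_ord. Qed.

Lemma sum_edge_const (x : R) : \sum_(e : edge_t H) x = m * x.
Proof. by rewrite sumr_const_natr /edge_t card_sig. Qed.

Lemma sum_subdiv_mid0 : \sum_(e : edge_t H) \sum_(i < k) (0 : R) = 0.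
Proof. by rewrite big1 // => e _; rewrite big1_eq. Qed.

Lemma edge_end_indicator (e : edge_t H) u :
  (if (u == e1 e) || (u == e2 e) then 1 else 0) = (u == e1 e)%:R + (u == e2 e)%:R :> R.
Proof.
have := edge_ends_neq e.
by case: (eqVneq u (e1 e)) => [->|_] /=; [move/negbTE -> | case: (u == e2 e)];
  rewrite ?addr0 ?add0r.
Qed.

Lemma deg_subdiv_old u : dS (inl u) = kk * d u.
Proof.
rewrite deg_sum1 big_mkcond sum_subdiv /= big1 ?add0r //.
rewrite (@deg_sum1 R H u) -(sum_edge_incident sym irr (fun _ _ => 1)) mulr_sumr.
by apply: eq_bigr => e _; rewrite sum_ord_const !mulr1 edge_end_indicator.
Qed.

Lemma deg_subdiv_mid e i : dS (inr (e, i)) = 2.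
Proof.
rewrite deg_sum1 big_mkcond sum_subdiv /= sum_subdiv_mid0 addr0.
under eq_bigr do rewrite edge_end_indicator.
by rewrite big_split /= !sum_delta1.
Qed.

Lemma if_natr (b : bool) (x : R) : (if b then x else 0) = (if b then 1 else 0) * x.
Proof. by case: b; rewrite ?mul1r ?mul0r. Qed.

Lemma lap_subdiv_old (z : SV -> R) u : lap (H := S) z (inl u) =
  kk * d u * z (inl u)
  - \sum_(e : edge_t H) \sum_(i < k) ((u == e1 e)%:R + (u == e2 e)%:R) * z (inr (e, i)).
Proof.
rewrite /lap deg_subdiv_old big_mkcond sum_subdiv /= big1_eq add0r.
by congr (_ - _); apply: eq_bigr => e _; apply: eq_bigr => i _; rewrite if_natr edge_end_indicator.
Qed.

Lemma lap_subdiv_mid (z : SV -> R) e i :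
  lap (H := S) z (inr (e, i)) = 2 * z (inr (e, i)) - (z (inl (e1 e)) + z (inl (e2 e))).
Proof.
rewrite /lap deg_subdiv_mid big_mkcond sum_subdiv /= sum_subdiv_mid0 addr0.
under eq_bigr do rewrite if_natr edge_end_indicator mulrDl.
by rewrite big_split /= !sum_delta.
Qed.

Definition lift_potential (z : V -> R) (x : SV) : R :=
  match x with inl u => 2 / kk * z u | inr (e, _) => (z (e1 e) + z (e2 e)) / kk end.

Lemma lap_lift_old (z : V -> R) u : lap (H := S) (lift_potential z) (inl u) = lap z u.
Proof.
have := kk_neq0; rewrite lap_subdiv_old /= => kk0.
have -> : \sum_(e : edge_t H) \sum_(i < k)
      ((u == e1 e)%:R + (u == e2 e)%:R) * ((z (e1 e) + z (e2 e)) / kk)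
    = \sum_(e : edge_t H) ((u == e1 e)%:R * (z (e1 e) + z (e2 e))
                          + (u == e2 e)%:R * (z (e2 e) + z (e1 e))).
  by apply: eq_bigr => e _; rewrite sum_ord_const; field.
rewrite (sum_edge_incident sym irr (fun a b => z a + z b)) big_split /=.
have -> : \sum_(v | adj u v) z u = d u * z u.
  by rewrite deg_sum1 mulr_suml; apply: eq_bigr => v _; rewrite mul1r.
by rewrite /lap; field.
Qed.

Lemma lap_lift_mid (z : V -> R) e i : lap (H := S) (lift_potential z) (inr (e, i)) = 0.
Proof. by have := kk_neq0; rewrite lap_subdiv_mid /= => kk0; field. Qed.

Lemma lap_indicator_old e i u :
  lap (H := S) (fun y : SV => (y == inr (e, i))%:R : R) (inl u)
  = - ((u == e1 e)%:R + (u == e2 e)%:R).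
Proof.
rewrite lap_subdiv_old /= mulr0 sub0r; congr (- _).
under eq_bigr => f _ do under eq_bigr => j _ do rewrite mulrC.
rewrite -(sum_prod (fun p : edge_t H * 'I_k => ((inr p : SV) == inr (e, i))%:R
                                              * ((u == e1 p.1)%:R + (u == e2 p.1)%:R))).
by rewrite (sum_delta (e, i) (fun p => (u == e1 p.1)%:R + (u == e2 p.1)%:R)).
Qed.

Lemma lap_indicator_mid e i f j :
  lap (H := S) (fun y : SV => (y == inr (e, i))%:R : R) (inr (f, j))
  = 2 * ((inr (f, j) : SV) == inr (e, i))%:R.
Proof. by rewrite lap_subdiv_mid /= addr0 subr0. Qed.

Definition lift_green (M : V -> V -> R) (p : SV) : SV -> R :=
  match p with
  | inl a => lift_potential (M a)
  | inr (e, i) => fun y => 2^-1 * lift_potential (M (e1 e)) y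
                  + 2^-1 * lift_potential (M (e2 e)) y + 2^-1 * (y == inr (e, i))%:R
  end.

Definition lift_offset (c : V -> R) (x : SV) : R :=
  match x with inl u => c u | inr _ => 0 end.

Lemma green_family_subdiv (M : V -> V -> R) (c : V -> R) :
  green_family M c -> green_family (H := S) (lift_green M) (lift_offset c).
Proof.
move=> hM [a|[e i]] [u|[f j]] /=.
- by rewrite lap_lift_old hM.
- by rewrite lap_lift_mid subr0.
- by rewrite lap_comb3 !lap_lift_old !hM lap_indicator_old /=; field.
- rewrite (lap_comb3 (H := S) _ _ _ (lift_potential (M (e1 e))) (lift_potential (M (e2 e)))).
  by rewrite !lap_lift_mid lap_indicator_mid subr0; field.
Qed.

Lemma sum_deg_subdiv : \sum_(x : SV) dS x = kk * (\sum_u d u) + 2 * kk * m.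
Proof.
rewrite sum_subdiv; under eq_bigr do rewrite deg_subdiv_old.
under [X in _ + X]eq_bigr => e _ do
  (under eq_bigr do rewrite deg_subdiv_mid; rewrite sum_ord_const).
by rewrite sum_edge_const -mulr_sumr; ring.
Qed.

Lemma sum_deg_lift (z : V -> R) :
  \sum_(y : SV) dS y * lift_potential z y = 4 * \sum_u d u * z u.
Proof.
have := kk_neq0 => kk0; rewrite sum_subdiv.
have -> : \sum_u dS (inl u) * lift_potential z (inl u) = 2 * \sum_u d u * z u.
  by rewrite mulr_sumr; apply: eq_bigr => u _; rewrite deg_subdiv_old /=; field.
have -> : \sum_(e : edge_t H) \sum_(i < k) dS (inr (e, i)) * lift_potential z (inr (e, i))
          = 2 * \sum_(e : edge_t H) (z (e1 e) + z (e2 e)).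
  rewrite mulr_sumr; apply: eq_bigr => e _.
  by under eq_bigr do rewrite deg_subdiv_mid /=; rewrite sum_ord_const; field.
by rewrite sum_edge_ends //; ring.
Qed.

Lemma green_trace_subdiv (M : V -> V -> R) (c : V -> R) : green_family M c ->
  \sum_(x : SV) dS x * lift_green M x x
  = 4 * (\sum_u d u * M u u) - (nverts H)%:R + \sum_u c u + kk * m.
Proof.
move=> hM; have := kk_neq0 => kk0; rewrite sum_subdiv.
have -> : \sum_u dS (inl u) * lift_green M (inl u) (inl u) = 2 * \sum_u d u * M u u.
  by rewrite mulr_sumr; apply: eq_bigr => u _; rewrite deg_subdiv_old /=; field.
have -> : \sum_(e : edge_t H) \sum_(i < k) dS (inr (e, i)) * lift_green M (inr (e, i)) (inr (e, i))
   = \sum_(e : edge_t H) ((M (e1 e) (e1 e) + M (e2 e) (e2 e))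
                         + (M (e1 e) (e2 e) + M (e2 e) (e1 e)) + kk).
  apply: eq_bigr => e _; under eq_bigr do rewrite deg_subdiv_mid /= eqxx.
  by rewrite sum_ord_const /=; field.
rewrite big_split /= big_split /= (sum_edge_ends sym irr (fun a => M a a)).
rewrite (sum_edge_orient sym irr M).
have -> : \sum_u \sum_(v | adj u v) M u v = \sum_u (d u * M u u - 1 + c u).
  apply: eq_bigr => u _; have := hM u u; rewrite /lap eqxx => lapMu.
  by rewrite -[\sum_(v | _) _](subrK (d u * M u u)) -opprB lapMu /=; ring.
by rewrite sum_edge_const !big_split /= sumr_const_natr; ring.
Qed.

Lemma sum_deg_lift_green_mid (M : V -> V -> R) e i :
  \sum_(y : SV) dS y * lift_green M (inr (e, i)) y
  = 2 * (\sum_u d u * M (e1 e) u + \sum_u d u * M (e2 e) u) + 1.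
Proof.
have -> : \sum_(y : SV) dS y * lift_green M (inr (e, i)) y
          = 2^-1 * (\sum_y dS y * lift_potential (M (e1 e)) y)
            + 2^-1 * (\sum_y dS y * lift_potential (M (e2 e)) y)
            + 2^-1 * (\sum_y (y == inr (e, i))%:R * dS y).
  rewrite !mulr_sumr -!big_split /=; apply: eq_bigr => y _; ring.
by rewrite !sum_deg_lift sum_delta deg_subdiv_mid; field.
Qed.

Lemma green_total_subdiv (M : V -> V -> R) :
  \sum_(x : SV) \sum_(y : SV) dS x * dS y * lift_green M x y
  = 8 * kk * (\sum_u \sum_v d u * d v * M u v) + 2 * kk * m.
Proof.
pose r a := \sum_u d u * M a u.
have row x : \sum_y dS x * dS y * lift_green M x y = dS x * \sum_y dS y * lift_green M x y.
  by rewrite mulr_sumr; apply: eq_bigr => y _; rewrite mulrA.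
have -> : \sum_u \sum_v d u * d v * M u v = \sum_u d u * r u.
  by apply: eq_bigr => u _; rewrite mulr_sumr; apply: eq_bigr => v _; rewrite mulrA.
rewrite sum_subdiv.
have -> : \sum_u \sum_y dS (inl u) * dS y * lift_green M (inl u) y = 4 * kk * \sum_u d u * r u.
  rewrite mulr_sumr; apply: eq_bigr => u _.
  by rewrite row /= sum_deg_lift deg_subdiv_old /r; ring.
have -> : \sum_(e : edge_t H) \sum_(i < k) \sum_y
              dS (inr (e, i)) * dS y * lift_green M (inr (e, i)) y
          = \sum_(e : edge_t H) (4 * kk * (r (e1 e) + r (e2 e)) + 2 * kk).
  apply: eq_bigr => e _; under eq_bigr do rewrite row sum_deg_lift_green_mid deg_subdiv_mid.
  by rewrite sum_ord_const /r; ring.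
by rewrite big_split /= -mulr_sumr sum_edge_ends // sum_edge_const; ring.
Qed.

Lemma nverts_subdiv : nverts S = (nverts H + nedges H * k)%N.
Proof. by rewrite /nverts /= /sub_V card_sum card_prod card_ord /edge_t card_sig. Qed.

Lemma nedges_subdiv : (nedges S)%:R = 2 * kk * m.
Proof.
have [symS irrS] := subdiv_simple.
apply: (@mulfI _ 2); first by rewrite pnatr_eq0.
by rewrite handshake // sum_deg_subdiv -handshake //; ring.
Qed.

Lemma Kf_star_subdiv (M : V -> V -> R) (c : V -> R) : green_family M c ->
  Kf_star R S
  = 8 * kk * Kf_star R H + 2 * kk * m - 4 * kk * m * (nverts H)%:R + 4 * kk ^+ 2 * m ^+ 2.
Proof.
move=> hM; have [symS irrS] := subdiv_simple.
rewrite (Kf_star_green symS irrS (green_family_subdiv hM)) (Kf_star_green sym irr hM).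
rewrite sum_deg_subdiv (green_trace_subdiv hM) green_total_subdiv -handshake //.
(* With no vertices both [m] and the offsets vanish; otherwise the offsets sum to 1. *)
have [a _|V0] := pickP (fun _ : V => true).
  by rewrite (sum_green_offset sym a hM); ring.
have -> : m = 0.
  by apply: (@mulfI _ 2); rewrite ?pnatr_eq0 // handshake // big_pred0 ?mulr0.
by ring.
Qed.

End Subdivision.

Definition Kf_closed_form (R : numFieldType) (K n m Kf X Y : R) : R :=
  X ^+ 3 * Y * Kf + X * Y * (X ^+ 2 - 1) / 3 * (m - 2 * m * n)
  + K * (X ^+ 2 * Y) * (Y - X) / (K - 2) * m ^+ 2
  - K * (X * Y) * (X ^+ 2 - 2 * K * (X ^+ 2 - 1) + 3 * (X * Y) - 4)
      / (3 * (K - 2) * (2 * K - 1)) * m ^+ 2.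

Lemma Kf_closed_form_step (R : numFieldType) (K n m Kf X Y : R) :
  K - 2 != 0 -> 2 * K - 1 != 0 ->
  Kf_closed_form K n m Kf (2 * X) (K * Y) =
  8 * K * Kf_closed_form K n m Kf X Y + 2 * K * (X * Y * m)
  - 4 * K * (X * Y * m) * (n + K * m * (X * Y - 1) / (2 * K - 1))
  + 4 * K ^+ 2 * (X * Y * m) ^+ 2.
Proof. by move=> K2 K1; rewrite /Kf_closed_form; field; rewrite K2 K1. Qed.

Section Iteration.
Variables (R : numFieldType) (G : graph) (k : nat).
Local Notation K := (k%:R : R).
Local Notation n := ((nverts G)%:R : R).
Local Notation m := ((nedges G)%:R : R).
Local Notation Gr r := (iter_subdiv k r G).
Hypothesis simple_G : simple_graph G.
Hypothesis k_gt2 : (2 < k)%N.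

Let k_gt0 : (0 < k)%N := ltnW (ltnW k_gt2).

Lemma K_sub2_neq0 : K - 2 != 0.
Proof. by rewrite subr_eq0 -[2]/(2%:R) eqr_nat gtn_eqF. Qed.

Lemma K_mul2_sub1_neq0 : 2 * K - 1 != 0.
Proof. rewrite subr_eq0 -[2]/(2%:R) -natrM -[1]/(1%:R) eqr_nat; have := k_gt2; lia. Qed.

Lemma simple_iter_subdiv r : simple_graph (Gr r).
Proof. by elim: r => //= r [sym irr]; apply: subdiv_simple. Qed.

Lemma nedges_iter_subdiv r : (nedges (Gr r))%:R = (2 * K) ^+ r * m.
Proof.
elim: r => [|r IH] /=; first by rewrite mul1r.
have [sym irr] := simple_iter_subdiv r.
by rewrite (nedges_subdiv R k sym irr) IH exprS; ring.
Qed.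

Lemma nverts_iter_subdiv r :
  (nverts (Gr r))%:R * (2 * K - 1) = n * (2 * K - 1) + K * m * ((2 * K) ^+ r - 1).
Proof.
elim: r => [|r IH] /=; first by rewrite subrr mulr0 addr0.
by rewrite nverts_subdiv natrD natrM mulrDl IH nedges_iter_subdiv exprS; ring.
Qed.

Lemma green_iter_subdiv r :
  (exists (M : gV G -> gV G -> R) (c : gV G -> R), green_family M c) ->
  exists (M : gV (Gr r) -> gV (Gr r) -> R) (c : gV (Gr r) -> R), green_family M c.
Proof.
move=> hG; elim: r => //= r [M [c hM]].
have [sym irr] := simple_iter_subdiv r.
exists (lift_green (k := k) M), (lift_offset (k := k) c).
exact: (green_family_subdiv sym irr k_gt0 hM).
Qed.

Lemma Kf_star_iter_subdiv r :
  (exists (M : gV G -> gV G -> R) (c : gV G -> R), green_family M c) ->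
  Kf_star R (Gr r) = Kf_closed_form K n m (Kf_star R G) (2 ^+ r) (K ^+ r).
Proof.
move=> hG; elim: r => [|r IH].
  rewrite /Kf_closed_form !expr0 !expr1n subrr /=.
  by field; rewrite K_sub2_neq0 K_mul2_sub1_neq0.
have [sym irr] := simple_iter_subdiv r.
have [M [c hM]] := green_iter_subdiv r hG.
rewrite /= (Kf_star_subdiv sym irr k_gt0 hM) IH !exprS.
rewrite Kf_closed_form_step ?K_sub2_neq0 ?K_mul2_sub1_neq0 //.
have n_r : (nverts (Gr r))%:R = n + K * m * (2 ^+ r * K ^+ r - 1) / (2 * K - 1).
  apply: (mulIf K_mul2_sub1_neq0); rewrite nverts_iter_subdiv -exprMn.
  by field; exact: K_mul2_sub1_neq0.
by rewrite n_r nedges_iter_subdiv exprMn; ring.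
Qed.

End Iteration.

Theorem theorem4p6 (R : realFieldType) (G : graph) (k r : nat) :
  simple_graph G -> connected_graph G -> (2 < k)%N -> (1 <= r)%N ->
  let n : R := (nverts G)%:R in
  let m : R := (nedges G)%:R in
  let kk : R := k%:R in
  Kf_star R (iter_subdiv k r G) =
    (8 * kk) ^+ r * Kf_star R G
    + (2 * kk) ^+ r * (4 ^+ r - 1) / 3 * (m - 2 * m * n)
    + kk * (4 * kk) ^+ r * (kk ^+ r - 2 ^+ r) / (kk - 2) * m ^+ 2
    - kk * (2 * kk) ^+ r * (4 ^+ r - 2 * kk * (4 ^+ r - 1) + 3 * (2 * kk) ^+ r - 4)
        / (3 * (kk - 2) * (2 * kk - 1)) * m ^+ 2.
Proof.
move=> simple_G conn_G k_gt2 _ n m kk.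
have [sym irr] := simple_G.
rewrite (Kf_star_iter_subdiv simple_G k_gt2 r (exists_green_family R sym irr conn_G)).
have pow8 : (8 : R) ^+ r = (2 ^+ r) ^+ 3 by rewrite exprAC; congr (_ ^+ _); ring.
have pow4 : (4 : R) ^+ r = (2 ^+ r) ^+ 2 by rewrite exprAC; congr (_ ^+ _); ring.
rewrite /Kf_closed_form !exprMn pow8 pow4.
by field; rewrite (K_sub2_neq0 R k_gt2) (K_mul2_sub1_neq0 R k_gt2).
Qed.
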